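(* Let $M=\{x\in\mathbb{R}^k:x_i\ge0,\ \sum_ix_i=1\}$, $M_0=\{x\in M:\prod_ix_i=0\}$, and $M_1=M\setminus M_0$. Let $F:M\to M$ have the form $F_i(x)=x_if_i(x)$ with each $f_i:M\to(0,\infty)$ continuous. Let $p^\varepsilon$, $\varepsilon=1/N$, be the transition kernel of the multinomial process associated with $F$. Set $\rho(x,y)=\sum_{i=1}^ky_i\log\frac{y_i}{F_i(x)}$, with the conventions $0\log0=0$ and $y\log(y/0)=+\infty$ for $y>0$. Then $\rho$ and $p^\varepsilon$ satisfy Hypotheses (LD) and (LD0).
   Context: For $x\in M$ and $N\in\mathbb{N}$, let $Z_1(x),Z_2(x),\dots$ be independent multinomial random vectors with $N$ trials, $k$ outcomes, and probability $x_i$ of outcome $i$. With $\varepsilon=1/N$, the multinomial process associated with $F$ is the Markov chain on $M\cap\varepsilon\mathbb{Z}^k$ given by $X^\varepsilon_{t+1}=\varepsilon Z_{t+1}(F(X^\varepsilon_t))$. Its kernel is $p^\varepsilon(x,\Gamma)=\mathbb{P}[\varepsilon Z_1(F(x))\in\Gamma]$. Let $d(x,y)=\max_i|x_i-y_i|$. Hypothesis (LD). There is $\rho:M\times M\to[0,+\infty]$ such that: (i) $\rho$ is continuous on $M_1\times M$; (ii) $\rho(x,y)=0$ iff $y=F(x)$; (iii) for every $\beta>0$, $\inf\{\rho(x,y):x,y\in M,\ d(F(x),y)>\beta\}>0$; (iv) lower bound: for every compact $K\subset M_1$, every open ball $U$ of $M$ and every $\eta>0$, there is $\varepsilon_0>0$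 such that $\varepsilon\log p^\varepsilon(x,U)\ge-\inf_{y\in U}\rho(x,y)-\eta$ for all $x\in K$ and $\varepsilon<\varepsilon_0$; (v) upper bound: for every closed $C\subset M$ and every $\eta>0$, there is $\varepsilon_0>0$ such that $\varepsilon\log p^\varepsilon(x,C)\le-\inf_{y\in C}\rho(x,y)+\eta$ for all $x\in M$ and $\varepsilon<\varepsilon_0$. Hypothesis (LD0). For every $c>0$ there is an open neighborhood $V_0$ of $M_0$ with $\liminf_{\varepsilon\to0}\inf_{x\in V_0}\varepsilon\log p^\varepsilon(x,M_0)\ge-c$. *)

From Stdlib Require Import Reals Lra List Arith ClassicalEpsilon.
Open Scope R_scope.

(* Points of R^k are represented as functions nat -> R; only the
   coordinates 0..k-1 matter. *)
Definition vec := nat -> R.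

Fixpoint sumk (k : nat) (g : nat -> R) : R :=
  match k with O => 0 | S k' => sumk k' g + g k' end.
Fixpoint prodk (k : nat) (g : nat -> R) : R :=
  match k with O => 1 | S k' => prodk k' g * g k' end.

Fixpoint distk (k : nat) (x y : vec) : R :=
  match k with O => 0 | S k' => Rmax (distk k' x y) (Rabs (x k' - y k')) end.

Definition vec_eq (k : nat) (x y : vec) : Prop := forall i, (i < k)%nat -> x i = y i.

Definition inM (k : nat) (x : vec) : Prop :=
  (forall i, (i < k)%nat -> 0 <= x i) /\ sumk k x = 1.
Definition inM0 (k : nat) (x : vec) : Prop := inM k x /\ prodk k x = 0.
Definition inM1 (k : nat) (x : vec) : Prop := inM k x /\ prodk k x <> 0.

Definition Fof (f : nat -> vec -> R) : vec -> vec := fun x i => x i * f i x.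

(* extended nonnegative reals [0,+oo] (values of rho) *)
Inductive ER : Type := Fin (r : R) | PInf.
Definition ER_le (a b : ER) : Prop :=
  match a, b with
  | _, PInf => True
  | PInf, Fin _ => False
  | Fin r, Fin s => r <= s
  end.
Definition ER_lt (a b : ER) : Prop :=
  match a, b with
  | Fin _, PInf => True
  | PInf, _ => False
  | Fin r, Fin s => r < s
  end.
Definition ER_plus (a b : ER) : ER :=
  match a, b with Fin r, Fin s => Fin (r + s) | _, _ => PInf end.
Fixpoint ER_sumk (k : nat) (g : nat -> ER) : ER :=
  match k with O => Fin 0 | S k' => ER_plus (ER_sumk k' g) (g k') end.

(* m is the infimum (greatest lower bound in [-oo,+oo] restricted to ER;
   the inf of the empty set is +oo) of the set S of values *)
Definition is_inf (S : ER -> Prop) (m : ER) : Prop :=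
  (forall s, S s -> ER_le m s) /\
  (forall l, (forall s, S s -> ER_le l s) -> ER_le l m).

Definition rho_term (y q : R) : ER :=
  if Req_EM_T y 0 then Fin 0
  else if Req_EM_T q 0 then PInf
  else Fin (y * ln (y / q)).

Definition rho (k : nat) (F : vec -> vec) (x y : vec) : ER :=
  ER_sumk k (fun i => rho_term (y i) (F x i)).

(* all z = (z_0,...,z_{k-1}) in N^k with sum N *)
Fixpoint comps (k N : nat) : list (list nat) :=
  match k with
  | O => match N with O => nil :: nil | _ => nil end
  | S k' => flat_map (fun j => map (cons j) (comps k' (N - j))) (seq 0 (S N))
  end.

(* prod_i q_i^{z_i} / z_i!  (indices starting at i) *)
Fixpoint mweight (q : vec) (z : list nat) (i : nat) : R :=
  match z with
  | nil => 1
  | a :: z' => q i ^ a / INR (fact a) * mweight q z' (S i)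
  end.

Definition scaled_pt (N : nat) (z : list nat) : vec :=
  fun i => INR (nth i z O) / INR N.

Definition indic (P : Prop) : R :=
  if excluded_middle_informative P then 1 else 0.

(* P[ eps Z(q) in Gamma ], Z(q) multinomial with N trials, k outcomes,
   probabilities q_i *)
Definition multinom_prob (k N : nat) (q : vec) (Gamma : vec -> Prop) : R :=
  fold_right Rplus 0
    (map (fun z => indic (Gamma (scaled_pt N z)) * (INR (fact N) * mweight q z 0))
         (comps k N)).

(* kernel p^eps(x,Gamma) of the multinomial process associated with F,
   eps = 1/N *)
Definition kernel (k : nat) (F : vec -> vec) (N : nat) (x : vec)
  (Gamma : vec -> Prop) : R :=
  multinom_prob k N (F x) Gamma.

Definition open_set (k : nat) (U : vec -> Prop) : Prop :=
  forall x, U x -> exists r, 0 < r /\ forall y, distk k x y < r -> U y.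

Definition compact (k : nat) (K : vec -> Prop) : Prop :=
  forall (I : Type) (U : I -> vec -> Prop),
    (forall i, open_set k (U i)) ->
    (forall x, K x -> exists i, U i x) ->
    exists l : list I, forall x, K x -> exists i, In i l /\ U i x.

(* closed subset of M (relative topology; equivalently closed in R^k) *)
Definition closed_in_M (k : nat) (C : vec -> Prop) : Prop :=
  (forall y, C y -> inM k y) /\
  (forall y, inM k y ->
     (forall r, 0 < r -> exists z, C z /\ distk k y z < r) -> C y).

Definition open_in_M (k : nat) (V : vec -> Prop) : Prop :=
  (forall x, V x -> inM k x) /\
  (forall x, V x -> exists r, 0 < r /\
     forall y, inM k y -> distk k x y < r -> V y).

Definition ballM (k : nat) (c : vec) (r : R) : vec -> Prop :=
  fun y => inM k y /\ distk k c y < r.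

Definition ER_continuous_on (k : nat) (D : vec -> vec -> Prop)
  (g : vec -> vec -> ER) : Prop :=
  forall x y, D x y ->
    match g x y with
    | Fin r => forall e, 0 < e -> exists del, 0 < del /\
        forall x' y', D x' y' -> distk k x x' < del -> distk k y y' < del ->
          exists r', g x' y' = Fin r' /\ Rabs (r' - r) < e
    | PInf => forall A, exists del, 0 < del /\
        forall x' y', D x' y' -> distk k x x' < del -> distk k y y' < del ->
          ER_lt (Fin A) (g x' y')
    end.

(* "eps log P >= - m - eta", with log 0 = -oo *)
Definition lower_ok (eps P : R) (m : ER) (eta : R) : Prop :=
  match m with
  | Fin r => 0 < P /\ - r - eta <= eps * ln P
  | PInf => True
  end.
(* "eps log P <= - m + eta", with log 0 = -oo *)
Definition upper_ok (eps P : R) (m : ER) (eta : R) : Prop :=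
  match m with
  | Fin r => P = 0 \/ (0 < P /\ eps * ln P <= - r + eta)
  | PInf => P = 0
  end.

(* Hypothesis (LD); the kernel p is indexed by N, eps = 1/N *)
Definition Hyp_LD (k : nat) (F : vec -> vec) (rh : vec -> vec -> ER)
  (p : nat -> vec -> (vec -> Prop) -> R) : Prop :=
  ER_continuous_on k (fun x y => inM1 k x /\ inM k y) rh /\
  (forall x y, inM k x -> inM k y -> (rh x y = Fin 0 <-> vec_eq k y (F x))) /\
  (forall beta, 0 < beta -> forall m,
     is_inf (fun v => exists x y, inM k x /\ inM k y /\
                        distk k (F x) y > beta /\ v = rh x y) m ->
     ER_lt (Fin 0) m) /\
  (forall K, compact k K -> (forall x, K x -> inM1 k x) ->
   forall c r, inM k c -> 0 < r ->
   forall eta, 0 < eta ->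
   exists eps0, 0 < eps0 /\
     forall N, (0 < N)%nat -> / INR N < eps0 ->
     forall x, K x ->
     forall m, is_inf (fun v => exists y, ballM k c r y /\ v = rh x y) m ->
       lower_ok (/ INR N) (p N x (ballM k c r)) m eta) /\
  (forall C, closed_in_M k C ->
   forall eta, 0 < eta ->
   exists eps0, 0 < eps0 /\
     forall N, (0 < N)%nat -> / INR N < eps0 ->
     forall x, inM k x ->
     forall m, is_inf (fun v => exists y, C y /\ v = rh x y) m ->
       upper_ok (/ INR N) (p N x C) m eta).

(* Hypothesis (LD0); the liminf over eps = 1/N -> 0 of the infimum over V0
   is unfolded: liminf >= -c  iff for every del > 0, eventually the inf is
   >= -c - del, iff eventually every value is >= -c - del *)
Definition Hyp_LD0 (k : nat) (p : nat -> vec -> (vec -> Prop) -> R) : Prop :=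
  forall c, 0 < c ->
  exists V0, open_in_M k V0 /\ (forall x, inM0 k x -> V0 x) /\
    forall del, 0 < del -> exists N0, forall N, (N0 <= N)%nat -> (0 < N)%nat ->
      forall x, V0 x ->
        0 < p N x (inM0 k) /\ - c - del <= / INR N * ln (p N x (inM0 k)).

(* Pinsker-type bound: rho(x, y) dominates the Hellinger distance sum_i (sqrt y_i - sqrt F_i(x))^2,
   which gives (ii) and (iii).  For the large deviation bounds, a lattice point z with sum z = N has
   multinomial probability between exp (- N rho(x, z/N)) (e N)^-k and exp (- N rho(x, z/N)), by the
   Stirling bounds n^n <= n! e^n <= e n^(n+1); since there are at most (N+1)^k lattice points and
   k log N = o(N), summing gives the upper bound (v), and a lattice point within 1/N of a
   near-minimiser of rho(x, .) over the ball gives the lower bound (iv) locally uniformly on M1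
   (continuity of rho there), hence uniformly on compacts.  For (LD0), near M0 some F_i(x) is small,
   and with probability (1 - F_i(x))^N no draw has outcome i, which puts the process in M0. *)

From Pilot Require Import Defs.
From Stdlib Require Import Reals Lra Lia List ZArith Classical ClassicalEpsilon.
Open Scope R_scope.

Lemma ln_le_sub1 (x : R) : 0 < x -> ln x <= x - 1.
Proof. intros Hx. pose proof (exp_ineq1_le (ln x)). rewrite exp_ln in H; lra. Qed.

Lemma ln_le_mono (x y : R) : 0 < x <= y -> ln x <= ln y.
Proof. intros [H1 [H2|<-]]; [left; apply ln_increasing|]; lra. Qed.

Lemma exp_le_mono (x y : R) : x <= y -> exp x <= exp y.
Proof. intros [H|<-]; [left; apply exp_increasing|]; lra. Qed.

Lemma exp_ln_pow (a : R) (n : nat) : 0 < a -> exp (INR n * ln a) = a ^ n.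
Proof. intros. rewrite <- ln_pow by auto. apply exp_ln, pow_lt; auto. Qed.

Lemma Rdiv_le_0_compat (a b : R) : 0 <= a -> 0 < b -> 0 <= a / b.
Proof. intros. apply Rmult_le_pos; auto. left; apply Rinv_0_lt_compat; auto. Qed.

Lemma inv_INR_lt_inv (a : R) (N : nat) : 0 < a -> / a < INR N -> / INR N < a.
Proof. intros. assert (0 < / a) by (apply Rinv_0_lt_compat; auto).
  assert (/ INR N < / / a) by (apply Rinv_lt_contravar; nra). rewrite Rinv_inv in H2. auto. Qed.

Lemma lt_of_inv_INR_lt (M N : nat) : (0 < N)%nat -> / INR N < / INR (S M) -> (M < N)%nat.
Proof. intros HN Hlt. destruct (le_lt_dec N M) as [HNM|]; auto. exfalso.
  assert (INR N < INR (S M)) by (apply lt_INR; lia). assert (0 < INR N) by (apply lt_0_INR; lia).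
  assert (/ INR (S M) < / INR N) by (apply Rinv_lt_contravar; nra). lra. Qed.

Lemma INR_eventually_gt (A : R) : exists N0, forall N, (N0 <= N)%nat -> A < INR N.
Proof. destruct (INR_archimed 1 A ltac:(lra)) as [n Hn]. exists n. intros N HN.
  apply le_INR in HN. lra. Qed.

Lemma ln_le_2sqrt (x : R) : 1 <= x -> 1 + ln x <= 2 * sqrt x.
Proof. intros. assert (Hs : 0 < sqrt x) by (apply sqrt_lt_R0; lra).
  assert (ln x = 2 * ln (sqrt x)).
  { rewrite <- (sqrt_sqrt x) at 1 by lra. rewrite ln_mult by auto. ring. }
  pose proof (ln_le_sub1 (sqrt x) Hs). lra. Qed.

Lemma log_growth_eventually_le (c eta : R) : 0 <= c -> 0 < eta ->
  exists N0, forall N, (N0 <= N)%nat -> (1 <= N)%nat -> c * (1 + ln (INR N + 1)) <= eta * INR N.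
Proof. intros Hc He. destruct (INR_eventually_gt (16 * c * c / (eta * eta))) as [N0 HN0].
  exists N0. intros N H1 H2. pose proof (HN0 N H1).
  assert (HN : 1 <= INR N) by (apply (le_INR 1); auto).
  assert (1 + ln (INR N + 1) <= 2 * sqrt (2 * INR N)).
  { eapply Rle_trans. apply ln_le_2sqrt; lra. apply Rmult_le_compat_l. lra. apply sqrt_le_1_alt. lra. }
  set (t := sqrt (2 * INR N)) in *. assert (Ht : t * t = 2 * INR N) by (apply sqrt_sqrt; lra).
  assert (Ht0 : 0 <= t) by apply sqrt_pos.
  assert (16 * c * c <= eta * eta * (2 * INR N)).
  { assert (16 * c * c / (eta * eta) * (eta * eta) = 16 * c * c) by (field; lra).
    assert (0 < eta * eta) by nra. nra. }
  assert (4 * c <= eta * t).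
  { rewrite <- Ht in H3. destruct (Rle_lt_dec (4 * c) (eta * t)); auto. exfalso.
    assert (0 < (4 * c - eta * t) * (4 * c + eta * t)) by (apply Rmult_lt_0_compat; nra). nra. }
  nra. Qed.

Lemma sumk_ext (k : nat) (g h : nat -> R) :
  (forall i, (i < k)%nat -> g i = h i) -> sumk k g = sumk k h.
Proof. induction k; simpl; intros; auto. rewrite IHk; [rewrite H|]; auto. Qed.

Lemma sumk_plus (k : nat) (g h : nat -> R) : sumk k (fun i => g i + h i) = sumk k g + sumk k h.
Proof. induction k; simpl; [lra|]. rewrite IHk; lra. Qed.

Lemma sumk_minus (k : nat) (g h : nat -> R) : sumk k (fun i => g i - h i) = sumk k g - sumk k h.
Proof. induction k; simpl; [lra|]. rewrite IHk; lra. Qed.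

Lemma sumk_scal (k : nat) (a : R) (g : nat -> R) : sumk k (fun i => a * g i) = a * sumk k g.
Proof. induction k; simpl; [lra|]. rewrite IHk; lra. Qed.

Lemma sumk_const (k : nat) (c : R) : sumk k (fun _ => c) = INR k * c.
Proof. induction k; [simpl; lra|]. cbn [sumk]. rewrite IHk, S_INR. lra. Qed.

Lemma sumk_le (k : nat) (g h : nat -> R) :
  (forall i, (i < k)%nat -> g i <= h i) -> sumk k g <= sumk k h.
Proof. induction k; simpl; intros; [lra|].
  pose proof (IHk ltac:(auto)). pose proof (H k ltac:(lia)). lra. Qed.

Lemma sumk_nonneg (k : nat) (g : nat -> R) : (forall i, (i < k)%nat -> 0 <= g i) -> 0 <= sumk k g.
Proof. intros. replace 0 with (sumk k (fun _ => 0)) by (rewrite sumk_const; ring).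
  apply sumk_le; auto. Qed.

Lemma sumk_ge_term (k : nat) (g : nat -> R) (j : nat) :
  (forall i, (i < k)%nat -> 0 <= g i) -> (j < k)%nat -> g j <= sumk k g.
Proof. induction k; simpl; intros; [lia|].
  destruct (Nat.eq_dec j k) as [->|]. pose proof (sumk_nonneg k g ltac:(auto)). lra.
  pose proof (IHk ltac:(auto) ltac:(lia)). pose proof (H k ltac:(lia)). lra. Qed.

Lemma sumk_shift (k : nat) (g : nat -> R) : sumk (S k) g = g O + sumk k (fun i => g (S i)).
Proof. induction k. simpl; lra.
  change (sumk (S (S k)) g) with (sumk (S k) g + g (S k)). rewrite IHk. simpl. lra. Qed.

Lemma sumk_telescope (k : nat) (a : nat -> R) : sumk k (fun i => a (S i) - a i) = a k - a O.
Proof. induction k; simpl. ring. rewrite IHk. ring. Qed.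

Lemma Rabs_sumk_le (k : nat) (g : nat -> R) : Rabs (sumk k g) <= sumk k (fun i => Rabs (g i)).
Proof. induction k; simpl. rewrite Rabs_R0; lra.
  eapply Rle_trans. apply Rabs_triang. lra. Qed.

Lemma prodk_ext (k : nat) (g h : nat -> R) :
  (forall i, (i < k)%nat -> g i = h i) -> prodk k g = prodk k h.
Proof. induction k; simpl; intros; auto. rewrite IHk; [rewrite H|]; auto. Qed.

Lemma prodk_shift (k : nat) (g : nat -> R) : prodk (S k) g = g O * prodk k (fun i => g (S i)).
Proof. induction k. simpl; lra.
  change (prodk (S (S k)) g) with (prodk (S k) g * g (S k)). rewrite IHk. simpl. lra. Qed.

Lemma prodk_mult (k : nat) (g h : nat -> R) : prodk k (fun i => g i * h i) = prodk k g * prodk k h.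
Proof. induction k; simpl; [lra|]. rewrite IHk; lra. Qed.

Lemma prodk_const (k : nat) (c : R) : prodk k (fun _ => c) = c ^ k.
Proof. induction k; simpl; [lra|]. rewrite IHk; ring. Qed.

Lemma prodk_nonneg (k : nat) (g : nat -> R) : (forall i, (i < k)%nat -> 0 <= g i) -> 0 <= prodk k g.
Proof. induction k; simpl; intros; [lra|]. apply Rmult_le_pos; auto. Qed.

Lemma prodk_pos (k : nat) (g : nat -> R) : (forall i, (i < k)%nat -> 0 < g i) -> 0 < prodk k g.
Proof. induction k; simpl; intros; [lra|]. apply Rmult_lt_0_compat; auto. Qed.

Lemma prodk_le (k : nat) (g h : nat -> R) :
  (forall i, (i < k)%nat -> 0 <= g i <= h i) -> prodk k g <= prodk k h.
Proof. induction k; simpl; intros; [lra|].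
  apply Rmult_le_compat; try apply H; auto. apply prodk_nonneg. intros; apply H; lia. Qed.

Lemma prodk_eq0 (k : nat) (g : nat -> R) (j : nat) : (j < k)%nat -> g j = 0 -> prodk k g = 0.
Proof. induction k; simpl; intros; [lia|].
  destruct (Nat.eq_dec j k) as [->|]. rewrite H0; lra. rewrite IHk; auto; lra || lia. Qed.

Lemma prodk_eq0_inv (k : nat) (g : nat -> R) : prodk k g = 0 -> exists j, (j < k)%nat /\ g j = 0.
Proof. induction k; simpl; intros. lra.
  apply Rmult_integral in H as [H|H]; eauto.
  destruct (IHk H) as [j [? ?]]. exists j; split; auto. Qed.

Lemma exp_sumk (k : nat) (g : nat -> R) : exp (sumk k g) = prodk k (fun i => exp (g i)).
Proof. induction k; simpl. apply exp_0. rewrite exp_plus, IHk; auto. Qed.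

Lemma distk_nonneg (k : nat) (x y : vec) : 0 <= distk k x y.
Proof. induction k; simpl. lra. eapply Rle_trans; [apply IHk|apply Rmax_l]. Qed.

Lemma distk_coord (k : nat) (x y : vec) (i : nat) : (i < k)%nat -> Rabs (x i - y i) <= distk k x y.
Proof. induction k; simpl; intros. lia. destruct (Nat.eq_dec i k) as [->|]. apply Rmax_r.
  eapply Rle_trans; [apply IHk; lia|apply Rmax_l]. Qed.

Lemma distk_lt (k : nat) (x y : vec) (r : R) :
  0 < r -> (forall i, (i < k)%nat -> Rabs (x i - y i) < r) -> distk k x y < r.
Proof. induction k; simpl; intros. lra. apply Rmax_lub_lt; auto. Qed.

Lemma distk_le (k : nat) (x y : vec) (r : R) :
  0 <= r -> (forall i, (i < k)%nat -> Rabs (x i - y i) <= r) -> distk k x y <= r.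
Proof. induction k; simpl; intros. lra. apply Rmax_lub; auto. Qed.

Lemma distk_gt (k : nat) (x y : vec) (b : R) :
  0 <= b -> b < distk k x y -> exists i, (i < k)%nat /\ b < Rabs (x i - y i).
Proof. intros Hb Hd. apply NNPP. intros Hno.
  assert (distk k x y <= b); [|lra].
  apply distk_le; auto. intros i Hi. apply Rnot_lt_le. intros Hlt. apply Hno; eauto. Qed.

Lemma distk_refl (k : nat) (x : vec) : distk k x x = 0.
Proof. apply Rle_antisym; [|apply distk_nonneg].
  apply distk_le; [lra|]. intros. rewrite Rminus_diag, Rabs_R0; lra. Qed.

Lemma distk_triangle (k : nat) (x y z : vec) : distk k x z <= distk k x y + distk k y z.
Proof. apply distk_le. pose proof (distk_nonneg k x y); pose proof (distk_nonneg k y z); lra.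
  intros i Hi. pose proof (distk_coord k x y i Hi). pose proof (distk_coord k y z i Hi).
  replace (x i - z i) with ((x i - y i) + (y i - z i)) by ring.
  eapply Rle_trans. apply Rabs_triang. lra. Qed.

Lemma common_delta (P : nat -> R -> Prop) (k : nat) :
  (forall i d d', P i d -> 0 < d' <= d -> P i d') ->
  (forall i, (i < k)%nat -> exists d, 0 < d /\ P i d) ->
  exists d, 0 < d /\ forall i, (i < k)%nat -> P i d.
Proof. intros Hmono. induction k; intros H.
  - exists 1; split; [lra|intros; lia].
  - destruct IHk as [d1 [Hd1 H1]]. intros; apply H; lia.
    destruct (H k ltac:(lia)) as [d2 [Hd2 H2]].
    exists (Rmin d1 d2); split. apply Rmin_glb_lt; auto.
    intros i Hi. destruct (Nat.eq_dec i k) as [->|].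
    + apply Hmono with d2; auto. split. apply Rmin_glb_lt; auto. apply Rmin_r.
    + apply Hmono with d1; [apply H1; lia|]. split. apply Rmin_glb_lt; auto. apply Rmin_l. Qed.

Lemma inM_le1 (k : nat) (x : vec) (i : nat) : inM k x -> (i < k)%nat -> x i <= 1.
Proof. intros [H1 H2] Hi. rewrite <- H2. apply sumk_ge_term; auto. Qed.

Lemma inM1_pos (k : nat) (x : vec) (i : nat) : inM1 k x -> (i < k)%nat -> 0 < x i.
Proof. intros [[H1 H2] H3] Hi. destruct (H1 i Hi); auto. exfalso; apply H3.
  apply (prodk_eq0 k x i); auto. Qed.

Definition relent (k : nat) (y q : vec) : ER := ER_sumk k (fun i => rho_term (y i) (q i)).

Lemma rho_relent (k : nat) (F : vec -> vec) (x y : vec) : rho k F x y = relent k y (F x).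
Proof. reflexivity. Qed.

Lemma relent_Fin (k : nat) (y q : vec) :
  (forall i, (i < k)%nat -> y i <> 0 -> q i <> 0) ->
  relent k y q = Fin (sumk k (fun i => y i * ln (y i / q i))).
Proof. unfold relent. induction k; simpl; intros Hsupp; auto.
  rewrite IHk by auto. unfold rho_term.
  destruct (Req_EM_T (y k) 0) as [->|Hy]. cbn [ER_plus]. f_equal; ring.
  destruct (Req_EM_T (q k) 0); [exfalso; apply (Hsupp k); auto|]; auto. Qed.

Lemma relent_Fin_inv (k : nat) (y q : vec) (r : R) : relent k y q = Fin r ->
  r = sumk k (fun i => y i * ln (y i / q i)) /\ (forall i, (i < k)%nat -> y i <> 0 -> q i <> 0).
Proof. unfold relent. revert r; induction k; simpl; intros r H.
  - inversion H; split; auto; intros; lia.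
  - destruct (ER_sumk k (fun i => rho_term (y i) (q i))) eqn:E; [|discriminate].
    destruct (IHk r0 eq_refl) as [H1 H2].
    unfold rho_term in H. destruct (Req_EM_T (y k) 0) as [Hy|Hy].
    + inversion H. split. rewrite H1, Hy. ring.
      intros i Hi Hyi. destruct (Nat.eq_dec i k) as [->|]; [contradiction|apply H2; auto; lia].
    + destruct (Req_EM_T (q k) 0); [discriminate|]. inversion H. split. rewrite H1. ring.
      intros i Hi Hyi. destruct (Nat.eq_dec i k) as [->|]; auto. apply H2; auto; lia. Qed.

Lemma relent_PInf_inv (k : nat) (y q : vec) : relent k y q = PInf ->
  exists i, (i < k)%nat /\ y i <> 0 /\ q i = 0.
Proof. unfold relent. induction k; simpl; intros H. discriminate.
  destruct (ER_sumk k (fun i => rho_term (y i) (q i))) eqn:E.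
  - unfold rho_term in H. destruct (Req_EM_T (y k) 0). discriminate.
    destruct (Req_EM_T (q k) 0). exists k; auto. discriminate.
  - destruct (IHk eq_refl) as [i [? ?]]. exists i; split; auto. Qed.

Lemma relent_pos_Fin (k : nat) (y q : vec) :
  (forall i, (i < k)%nat -> 0 < q i) -> (forall i, (i < k)%nat -> 0 <= y i) ->
  relent k y q = Fin (sumk k (fun i => y i * ln (y i) - y i * ln (q i))).
Proof. intros Hq Hy. rewrite relent_Fin by (intros i Hi _; pose proof (Hq i Hi); lra).
  f_equal. apply sumk_ext. intros i Hi.
  destruct (Hy i Hi) as [Hp|<-]; [|ring].
  unfold Rdiv. rewrite ln_mult, ln_Rinv by (auto using Rinv_0_lt_compat). ring. Qed.

Lemma hellinger_term_le (y q : R) : 0 <= y -> 0 <= q -> (y <> 0 -> q <> 0) ->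
  2 * (y - sqrt y * sqrt q) <= y * ln (y / q).
Proof. intros Hy Hq Hyq. destruct (Req_EM_T y 0) as [->|]. rewrite sqrt_0. lra.
  assert (Hy' : 0 < y) by lra. assert (Hq' : 0 < q) by (destruct Hq as [|<-]; auto; exfalso; apply Hyq; auto).
  set (a := sqrt y). set (b := sqrt q).
  assert (Ha : 0 < a) by (apply sqrt_lt_R0; auto). assert (Hb : 0 < b) by (apply sqrt_lt_R0; auto).
  assert (Ea : a * a = y) by (apply sqrt_sqrt; lra). assert (Eb : b * b = q) by (apply sqrt_sqrt; lra).
  assert (y / q = (a / b) ^ 2) by (rewrite <- Ea, <- Eb; field; lra).
  rewrite H, ln_pow by (apply Rdiv_lt_0_compat; auto).
  assert (ln (a / b) >= 1 - b / a).
  { assert (ln (b / a) <= b / a - 1) by (apply ln_le_sub1, Rdiv_lt_0_compat; auto).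
    replace (a / b) with (/ (b / a)) by (field; lra).
    rewrite ln_Rinv by (apply Rdiv_lt_0_compat; auto). lra. }
  simpl INR. replace (y - a * b) with (y * (1 - b / a)) by (rewrite <- Ea; field; lra).
  assert (0 <= y * (ln (a / b) - (1 - b / a))) by (apply Rmult_le_pos; lra). nra. Qed.

(* Summing [hellinger_term_le] uses [sum y = sum q = 1]. *)
Lemma relent_ge_hellinger (k : nat) (y q : vec) (r : R) : inM k y -> inM k q -> relent k y q = Fin r ->
  sumk k (fun i => (sqrt (y i) - sqrt (q i)) ^ 2) <= r.
Proof. intros [Hy Hy1] [Hq Hq1] Hr. apply relent_Fin_inv in Hr as [-> Hsupp].
  apply Rle_trans with (sumk k (fun i => 2 * (y i - sqrt (y i) * sqrt (q i)))).
  - right. rewrite sumk_scal, sumk_minus.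
    transitivity (sumk k (fun i => y i + q i - 2 * (sqrt (y i) * sqrt (q i)))).
    + apply sumk_ext. intros i Hi.
      replace ((sqrt (y i) - sqrt (q i)) ^ 2) with
        (sqrt (y i) * sqrt (y i) + sqrt (q i) * sqrt (q i) - 2 * (sqrt (y i) * sqrt (q i))) by ring.
      rewrite !sqrt_sqrt; auto.
    + rewrite sumk_minus, sumk_plus, sumk_scal. lra.
  - apply sumk_le. intros. apply hellinger_term_le; auto. Qed.

Lemma sqrt_gap_ge (y q b : R) : 0 <= y <= 1 -> 0 <= q <= 1 -> 0 < b -> b < Rabs (q - y) ->
  b * b / 4 <= (sqrt y - sqrt q) ^ 2.
Proof. intros Hy Hq Hb Hgap.
  assert (sqrt y <= 1) by (rewrite <- sqrt_1; apply sqrt_le_1_alt; lra).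
  assert (sqrt q <= 1) by (rewrite <- sqrt_1; apply sqrt_le_1_alt; lra).
  pose proof (sqrt_pos y). pose proof (sqrt_pos q).
  assert (E : q - y = (sqrt q - sqrt y) * (sqrt q + sqrt y)).
  { replace ((sqrt q - sqrt y) * (sqrt q + sqrt y)) with (sqrt q * sqrt q - sqrt y * sqrt y) by ring.
    rewrite !sqrt_sqrt; lra. }
  rewrite E, Rabs_mult, (Rabs_pos_eq (sqrt q + sqrt y)) in Hgap by lra.
  assert (b < 2 * Rabs (sqrt q - sqrt y)) by (pose proof (Rabs_pos (sqrt q - sqrt y)); nra).
  rewrite <- Rsqr_pow2, Rsqr_abs, Rabs_minus_sym. unfold Rsqr. nra. Qed.

Definition fsum {A : Type} (l : list A) (g : A -> R) : R := fold_right Rplus 0 (map g l).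

Lemma fsum_app (A : Type) (l1 l2 : list A) (g : A -> R) : fsum (l1 ++ l2) g = fsum l1 g + fsum l2 g.
Proof. unfold fsum. induction l1; simpl. lra. rewrite IHl1. lra. Qed.

Lemma fsum_flat_map (A B : Type) (l : list A) (h : A -> list B) (g : B -> R) :
  fsum (flat_map h l) g = fsum l (fun j => fsum (h j) g).
Proof. induction l; simpl. reflexivity. rewrite fsum_app, IHl. reflexivity. Qed.

Lemma fsum_map (A B : Type) (l : list A) (c : A -> B) (g : B -> R) :
  fsum (map c l) g = fsum l (fun x => g (c x)).
Proof. unfold fsum. rewrite map_map. auto. Qed.

Lemma fsum_scal (A : Type) (l : list A) (a : R) (g : A -> R) : fsum l (fun x => a * g x) = a * fsum l g.
Proof. unfold fsum. induction l; simpl. ring. rewrite IHl. ring. Qed.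

Lemma fsum_le (A : Type) (l : list A) (g h : A -> R) :
  (forall x, In x l -> g x <= h x) -> fsum l g <= fsum l h.
Proof. unfold fsum. induction l; simpl; intros H. lra.
  pose proof (H a (or_introl eq_refl)). pose proof (IHl (fun x Hx => H x (or_intror Hx))). lra. Qed.

Lemma fsum_nonneg (A : Type) (l : list A) (g : A -> R) : (forall x, In x l -> 0 <= g x) -> 0 <= fsum l g.
Proof. unfold fsum. induction l; simpl; intros H. lra.
  pose proof (H a (or_introl eq_refl)). pose proof (IHl (fun x Hx => H x (or_intror Hx))). lra. Qed.

Lemma fsum_eq0 (A : Type) (l : list A) (g : A -> R) : (forall x, In x l -> g x = 0) -> fsum l g = 0.
Proof. unfold fsum. induction l; simpl; intros H. auto. rewrite H, IHl; auto. lra. Qed.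

Lemma fsum_ge_elem (A : Type) (l : list A) (g : A -> R) (a : A) :
  (forall x, In x l -> 0 <= g x) -> In a l -> g a <= fsum l g.
Proof. induction l; simpl; intros Hnn Ha. contradiction.
  pose proof (fsum_nonneg A l g (fun x Hx => Hnn x (or_intror Hx))).
  pose proof (Hnn a0 (or_introl eq_refl)). unfold fsum in *; simpl.
  destruct Ha as [<-|Ha]. lra. pose proof (IHl (fun x Hx => Hnn x (or_intror Hx)) Ha). lra. Qed.

Lemma fsum_le_const (A : Type) (l : list A) (g : A -> R) (c : R) :
  (forall x, In x l -> g x <= c) -> fsum l g <= INR (length l) * c.
Proof. unfold fsum. induction l; intros H; cbn [fold_right map length]. simpl; lra.
  rewrite S_INR. pose proof (H a (or_introl eq_refl)). pose proof (IHl (fun x Hx => H x (or_intror Hx))).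
  lra. Qed.

Lemma fsum_seq (N : nat) (g : nat -> R) : fsum (seq 0 (S N)) g = sum_f_R0 g N.
Proof. induction N. unfold fsum; simpl; lra.
  rewrite seq_S, fsum_app, IHN. unfold fsum; simpl. lra. Qed.

Lemma comps_spec (k N : nat) (z : list nat) : In z (comps k N) -> length z = k /\ list_sum z = N.
Proof. revert N z; induction k; intros N z H.
  - destruct N; simpl in H; [destruct H as [<-|[]]; auto|contradiction].
  - cbn [comps] in H. apply in_flat_map in H as [j [Hj Hz]].
    apply in_map_iff in Hz as [z' [<- Hz']].
    apply IHk in Hz' as [H1 H2]. apply in_seq in Hj. simpl. split; auto. lia. Qed.

Lemma comps_intro (k N : nat) (z : list nat) : length z = k -> list_sum z = N -> In z (comps k N).
Proof. revert N z; induction k; intros N z Hl Hs.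
  - destruct z; simpl in *; try lia. subst; simpl; auto.
  - destruct z as [|j z]; simpl in Hl, Hs; try lia. cbn [comps].
    apply in_flat_map. exists j. split. apply in_seq. lia. apply in_map, IHk; lia. Qed.

Lemma list_sum_map_le (A : Type) (l : list A) (g : A -> nat) (c : nat) :
  (forall x, In x l -> (g x <= c)%nat) -> (list_sum (map g l) <= length l * c)%nat.
Proof. induction l; simpl; intros H. lia. pose proof (H a (or_introl eq_refl)).
  pose proof (IHl (fun x Hx => H x (or_intror Hx))). lia. Qed.

Lemma in_le_fold_max (n : nat) (l : list nat) : In n l -> (n <= fold_right max O l)%nat.
Proof. induction l as [|a l IH]; simpl; [tauto|]. intros [<-|Hn]; [lia|]. specialize (IH Hn). lia. Qed.

Lemma comps_length (k N : nat) : (length (comps k N) <= (S N) ^ k)%nat.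
Proof. revert N; induction k; intros N. destruct N; simpl; lia.
  cbn [comps]. rewrite length_flat_map. eapply Nat.le_trans.
  - apply list_sum_map_le with (c := (S N ^ k)%nat). intros j Hj.
    rewrite length_map. eapply Nat.le_trans. apply IHk. apply Nat.pow_le_mono_l. lia.
  - rewrite length_seq, Nat.pow_succ_r'. lia. Qed.

Definition cnt (z : list nat) (i : nat) : nat := nth i z O.

Lemma sumk_cnt (z : list nat) : sumk (length z) (fun i => INR (cnt z i)) = INR (list_sum z).
Proof. unfold cnt. induction z. simpl; auto.
  change (length (a :: z)) with (S (length z)). rewrite sumk_shift. simpl. rewrite IHz, plus_INR. ring. Qed.

Lemma comps_sum (k N : nat) (z : list nat) : In z (comps k N) -> sumk k (fun i => INR (cnt z i)) = INR N.
Proof. intros Hz. apply comps_spec in Hz as [<- <-]. apply sumk_cnt. Qed.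

Lemma comps_cnt_le (k N : nat) (z : list nat) (i : nat) : In z (comps k N) -> (i < k)%nat -> (cnt z i <= N)%nat.
Proof. intros Hz Hi. apply INR_le. rewrite <- (comps_sum k N z Hz).
  apply (sumk_ge_term k (fun i => INR (cnt z i))); auto. intros; apply pos_INR. Qed.

Lemma scaled_pt_inM (k N : nat) (z : list nat) : (0 < N)%nat -> In z (comps k N) -> inM k (scaled_pt N z).
Proof. intros HN Hz. assert (HNp : 0 < INR N) by (apply lt_0_INR; lia). split.
  - intros; apply Rdiv_le_0_compat; auto; apply pos_INR.
  - transitivity (/ INR N * sumk k (fun i => INR (cnt z i))).
    + rewrite <- sumk_scal. apply sumk_ext; intros; unfold scaled_pt, cnt, Rdiv; ring.
    + rewrite (comps_sum k N z Hz). field; lra. Qed.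

Lemma mweight_prodk (z : list nat) (q : vec) (s : nat) :
  mweight q z s = prodk (length z) (fun j => q (s + j)%nat ^ nth j z O / INR (fact (nth j z O))).
Proof. revert s; induction z; intros s. simpl; auto.
  change (length (a :: z)) with (S (length z)). rewrite prodk_shift. cbn [mweight]. rewrite IHz.
  simpl. rewrite Nat.add_0_r. f_equal. apply prodk_ext. intros. do 3 f_equal. lia. Qed.

Lemma binomial_div_fact (x y : R) (N : nat) :
  sum_f_R0 (fun j => x ^ j / INR (fact j) * (y ^ (N - j) / INR (fact (N - j)))) N = (x + y) ^ N / INR (fact N).
Proof. rewrite binomial.
  match goal with |- _ = ?S / ?D => replace (S / D) with (/ D * S) by (unfold Rdiv; ring) end.
  rewrite scal_sum. apply sum_eq. intros. unfold C. field. repeat split; apply INR_fact_neq_0. Qed.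

Lemma multinomial_shift (k N : nat) (q : vec) (s : nat) :
  fsum (comps k N) (fun z => mweight q z s) = (sumk k (fun i => q (s + i)%nat)) ^ N / INR (fact N).
Proof. revert N s; induction k; intros N s.
  - destruct N; unfold fsum; cbn [comps map fold_right sumk mweight].
    simpl; field. rewrite pow_i by lia. unfold Rdiv; ring.
  - cbn [comps]. rewrite fsum_flat_map, fsum_seq, sumk_shift, Nat.add_0_r.
    replace (sumk k (fun i => q (s + S i)%nat)) with (sumk k (fun i => q (S s + i)%nat))
      by (apply sumk_ext; intros; f_equal; lia).
    rewrite <- binomial_div_fact. apply sum_eq. intros j Hj.
    rewrite fsum_map. simpl. rewrite fsum_scal, IHk. reflexivity. Qed.

Definition mprob (N : nat) (q : vec) (z : list nat) : R := INR (fact N) * mweight q z O.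

Lemma multinomial_theorem (k N : nat) (q : vec) : fsum (comps k N) (mprob N q) = (sumk k q) ^ N.
Proof. unfold mprob. rewrite fsum_scal, multinomial_shift. simpl. field_simplify; [|apply INR_fact_neq_0].
  reflexivity. Qed.

Lemma mprob_prodk (k N : nat) (q : vec) (z : list nat) : In z (comps k N) ->
  mprob N q z = INR (fact N) * prodk k (fun i => q i ^ cnt z i / INR (fact (cnt z i))).
Proof. intros Hz. unfold mprob. rewrite mweight_prodk. apply comps_spec in Hz as [-> _]. auto. Qed.

Lemma mprob_nonneg (k N : nat) (q : vec) (z : list nat) : In z (comps k N) ->
  (forall i, (i < k)%nat -> 0 <= q i) -> 0 <= mprob N q z.
Proof. intros Hz Hq. rewrite (mprob_prodk k) by auto. apply Rmult_le_pos. apply pos_INR.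
  apply prodk_nonneg. intros. apply Rdiv_le_0_compat. apply pow_le; auto. apply INR_fact_lt_0. Qed.

Lemma mprob_eq0 (k N : nat) (q : vec) (z : list nat) (i : nat) : In z (comps k N) -> (i < k)%nat ->
  q i = 0 -> cnt z i <> O -> mprob N q z = 0.
Proof. intros Hz Hi Hq Hc. rewrite (mprob_prodk k) by auto. rewrite (prodk_eq0 k _ i Hi). ring.
  rewrite Hq. destruct (cnt z i). contradiction. simpl. unfold Rdiv; ring. Qed.

Lemma mprob_relent_PInf (k N : nat) (q : vec) (z : list nat) : In z (comps k N) ->
  relent k (scaled_pt N z) q = PInf -> mprob N q z = 0.
Proof. intros Hz H. apply relent_PInf_inv in H as [i [Hi [H1 H2]]].
  apply (mprob_eq0 k N q z i); auto. intros Hc. apply H1. unfold scaled_pt. fold (cnt z i).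
  rewrite Hc. simpl. unfold Rdiv; ring. Qed.

Lemma exp_pow (x : R) (n : nat) : exp x ^ n = exp (INR n * x).
Proof. induction n. simpl. rewrite Rmult_0_l, exp_0; auto.
  rewrite S_INR. simpl pow. rewrite IHn, <- exp_plus. f_equal. ring. Qed.

Lemma succ_pow_le_e (n : nat) : INR (S n) ^ n <= exp 1 * INR n ^ n.
Proof. destruct n. simpl. pose proof (exp_ineq1_le 1). lra.
  assert (Hm : 0 < INR (S n)) by (apply lt_0_INR; lia).
  assert (E : INR (S (S n)) = INR (S n) * (1 + / INR (S n))) by (rewrite (S_INR (S n)); field; lra).
  set (m := INR (S n)) in *.
  rewrite E, Rpow_mult_distr, Rmult_comm. apply Rmult_le_compat_r. apply pow_le; lra.
  eapply Rle_trans. apply pow_incr. split. assert (0 < / m) by (apply Rinv_0_lt_compat; auto). lra.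
  apply exp_ineq1_le. rewrite exp_pow. fold m. right. f_equal. field. lra. Qed.

Lemma e_le_succ_pow (n : nat) : (1 <= n)%nat -> exp 1 * INR n ^ (S n) <= INR (S n) ^ (S n).
Proof. intros Hn. assert (Hm : 0 < INR n) by (apply lt_0_INR; lia).
  assert (E : INR (S n) = INR n * ((INR n + 1) / INR n)) by (rewrite S_INR; field; lra).
  set (m := INR n) in *.
  rewrite E, Rpow_mult_distr, Rmult_comm. apply Rmult_le_compat_l. apply pow_le; lra.
  rewrite <- exp_ln_pow by (apply Rdiv_lt_0_compat; lra). apply exp_le_mono.
  assert (ln (m / (m + 1)) <= m / (m + 1) - 1) by (apply ln_le_sub1, Rdiv_lt_0_compat; lra).
  replace ((m + 1) / m) with (/ (m / (m + 1))) by (field; lra).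
  rewrite ln_Rinv by (apply Rdiv_lt_0_compat; lra). rewrite S_INR. fold m.
  replace (m / (m + 1) - 1) with (- / (m + 1)) in H by (field; lra).
  assert ((m + 1) * / (m + 1) <= (m + 1) * (- ln (m / (m + 1)))) by (apply Rmult_le_compat_l; lra).
  rewrite Rinv_r in H0 by lra. lra. Qed.

Lemma stirling_lower (n : nat) : INR n ^ n <= INR (fact n) * exp (INR n).
Proof. induction n. simpl. rewrite exp_0; lra.
  pose proof (succ_pow_le_e n). rewrite fact_simpl, mult_INR.
  replace (INR (S n) ^ S n) with (INR (S n) * INR (S n) ^ n) by (simpl; ring).
  replace (exp (INR (S n))) with (exp (INR n) * exp 1) by (rewrite S_INR, exp_plus; auto).
  assert (0 < INR (S n)) by (apply lt_0_INR; lia). pose proof (exp_pos 1).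
  assert (INR (S n) ^ n <= INR (fact n) * exp (INR n) * exp 1).
  { eapply Rle_trans. apply H. rewrite (Rmult_comm _ (exp 1)). apply Rmult_le_compat_l; lra. }
  rewrite Rmult_assoc. apply Rmult_le_compat_l. lra. rewrite <- Rmult_assoc. auto. Qed.

Lemma stirling_upper (n : nat) : (1 <= n)%nat -> INR (fact n) * exp (INR n) <= exp 1 * INR n ^ (S n).
Proof. induction n; intros Hn. lia. destruct n. simpl. lra.
  pose proof (IHn ltac:(lia)). pose proof (e_le_succ_pow (S n) ltac:(lia)).
  rewrite fact_simpl, mult_INR. rewrite (S_INR (S n)) at 2. rewrite exp_plus.
  assert (0 < INR (S (S n))) by (apply lt_0_INR; lia). pose proof (exp_pos 1).
  apply Rle_trans with (INR (S (S n)) * exp 1 * (INR (fact (S n)) * exp (INR (S n)))). right; ring.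
  apply Rle_trans with (INR (S (S n)) * exp 1 * (exp 1 * INR (S n) ^ S (S n))).
  apply Rmult_le_compat_l. nra. auto.
  replace (INR (S (S n)) ^ S (S (S n))) with (INR (S (S n)) * INR (S (S n)) ^ S (S n)) by (simpl; ring).
  replace (INR (S (S n)) * exp 1 * (exp 1 * INR (S n) ^ S (S n)))
    with (exp 1 * (INR (S (S n)) * (exp 1 * INR (S n) ^ S (S n)))) by ring.
  apply Rmult_le_compat_l. lra. apply Rmult_le_compat_l; lra. Qed.

Lemma fact_exp_le (n : nat) : INR (fact n) * exp (INR n) <= exp 1 * INR (max n 1) * INR n ^ n.
Proof. destruct n. simpl. rewrite exp_0. pose proof (exp_ineq1_le 1). lra.
  replace (max (S n) 1) with (S n) by lia. pose proof (stirling_upper (S n) ltac:(lia)).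
  replace (INR (S n) ^ S (S n)) with (INR (S n) * INR (S n) ^ S n) in H by (simpl; ring). lra. Qed.

(* [exp (- N * relent (z / N) q)], see [kl_weight_relent]; factors with [cnt z i = 0] are [1]. *)
Definition kl_weight (k N : nat) (q : vec) (z : list nat) : R :=
  prodk k (fun i => (INR N * q i / INR (cnt z i)) ^ cnt z i).

Lemma kl_weight_nonneg (k N : nat) (q : vec) (z : list nat) :
  (forall i, (i < k)%nat -> 0 <= q i) -> 0 <= kl_weight k N q z.
Proof. intros Hq. apply prodk_nonneg. intros i Hi. apply pow_le.
  destruct (Nat.eq_dec (cnt z i) 0) as [->|]. simpl. unfold Rdiv; rewrite Rinv_0; lra.
  apply Rdiv_le_0_compat. apply Rmult_le_pos; auto. apply pos_INR. apply lt_0_INR; lia. Qed.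

Lemma kl_weight_relent (k N : nat) (q : vec) (z : list nat) (r : R) : (1 <= N)%nat ->
  (forall i, (i < k)%nat -> 0 <= q i) ->
  relent k (scaled_pt N z) q = Fin r -> kl_weight k N q z = exp (- INR N * r).
Proof. intros HN Hq H. assert (HNp : 0 < INR N) by (apply lt_0_INR; lia).
  apply relent_Fin_inv in H as [-> Hsupp]. rewrite <- sumk_scal, exp_sumk.
  apply prodk_ext. intros i Hi. unfold scaled_pt in *. fold (cnt z i) in *.
  destruct (Nat.eq_dec (cnt z i) 0) as [->|Hc].
  { simpl. unfold Rdiv. rewrite !Rmult_0_l, Rmult_0_r, exp_0. auto. }
  assert (Hz0 : 0 < INR (cnt z i)) by (apply lt_0_INR; lia).
  assert (Hqi : 0 < q i).
  { destruct (Hq i Hi); auto. exfalso. apply (Hsupp i Hi); auto.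
    apply Rgt_not_eq, Rdiv_lt_0_compat; auto. }
  assert (Hw : 0 < INR N * q i / INR (cnt z i)) by (apply Rdiv_lt_0_compat; nra).
  replace (INR (cnt z i) / INR N / q i) with (/ (INR N * q i / INR (cnt z i))) by (field; lra).
  rewrite ln_Rinv by auto.
  replace (- INR N * (INR (cnt z i) / INR N * - ln (INR N * q i / INR (cnt z i))))
    with (INR (cnt z i) * ln (INR N * q i / INR (cnt z i))) by (field; lra).
  rewrite exp_ln_pow; auto. Qed.

(* [mprob N q z = kl_weight * mprob N (z / N) z], and the second factor is a probability. *)
Lemma mprob_le_kl_weight (k N : nat) (q : vec) (z : list nat) : (1 <= N)%nat -> In z (comps k N) ->
  (forall i, (i < k)%nat -> 0 <= q i) -> mprob N q z <= kl_weight k N q z.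
Proof. intros HN Hz Hq. assert (HNp : 0 < INR N) by (apply lt_0_INR; lia).
  set (p := scaled_pt N z).
  assert (Hp : inM k p) by (apply scaled_pt_inM; auto; lia).
  assert (Hp1 : mprob N p z <= 1).
  { rewrite <- (pow1 N), <- (proj2 Hp), <- multinomial_theorem.
    apply fsum_ge_elem; auto. intros. apply (mprob_nonneg k); auto. apply Hp. }
  assert (E : mprob N q z = kl_weight k N q z * mprob N p z).
  { rewrite !(mprob_prodk k N _ z Hz). unfold kl_weight.
    rewrite (Rmult_comm (prodk k _) (INR (fact N) * _)), Rmult_assoc, <- prodk_mult. f_equal.
    apply prodk_ext. intros i Hi. unfold p, scaled_pt. fold (cnt z i).
    destruct (Nat.eq_dec (cnt z i) 0) as [->|]. simpl. field.
    assert (INR (cnt z i) <> 0) by (apply not_0_INR; auto).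
    replace (q i ^ cnt z i) with ((INR (cnt z i) / INR N) ^ cnt z i * (INR N * q i / INR (cnt z i)) ^ cnt z i)
      by (rewrite <- Rpow_mult_distr; f_equal; field; split; lra).
    field. apply INR_fact_neq_0. }
  rewrite E. pose proof (kl_weight_nonneg k N q z Hq).
  pose proof (mprob_nonneg k N p z Hz (proj1 Hp)). nra. Qed.

Lemma prod_fact_exp_le (k N : nat) (z : list nat) : (1 <= N)%nat -> In z (comps k N) ->
  prodk k (fun i => INR (fact (cnt z i))) * exp (INR N)
  <= (exp 1 * INR N) ^ k * prodk k (fun i => INR (cnt z i) ^ cnt z i).
Proof. intros HN Hz.
  replace (exp (INR N)) with (prodk k (fun i => exp (INR (cnt z i))))
    by (rewrite <- exp_sumk, (comps_sum k N z Hz); auto).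
  rewrite <- prodk_mult, <- prodk_const, <- prodk_mult. apply prodk_le.
  intros i Hi. split. apply Rmult_le_pos. left; apply INR_fact_lt_0. left; apply exp_pos.
  eapply Rle_trans. apply fact_exp_le. apply Rmult_le_compat_r. apply pow_le, pos_INR.
  apply Rmult_le_compat_l. left; apply exp_pos. apply le_INR.
  pose proof (comps_cnt_le k N z i Hz Hi). lia. Qed.

Lemma pow_list_sum (a : R) (z : list nat) : prodk (length z) (fun i => a ^ cnt z i) = a ^ list_sum z.
Proof. unfold cnt. induction z. auto. change (length (a0 :: z)) with (S (length z)).
  rewrite prodk_shift. simpl list_sum. rewrite pow_add, <- IHz. auto. Qed.

Lemma kl_weight_le_mprob (k N : nat) (q : vec) (z : list nat) : (1 <= N)%nat -> In z (comps k N) ->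
  (forall i, (i < k)%nat -> 0 <= q i) -> kl_weight k N q z <= mprob N q z * (exp 1 * INR N) ^ k.
Proof. intros HN Hz Hq. pose proof Hz as [Hlen Hsum]%comps_spec.
  set (Z := prodk k (fun i => INR (cnt z i) ^ cnt z i)).
  set (Fz := prodk k (fun i => INR (fact (cnt z i)))).
  set (Q := prodk k (fun i => q i ^ cnt z i)).
  assert (HZ : 0 < Z).
  { apply prodk_pos. intros. destruct (Nat.eq_dec (cnt z i) 0) as [->|]. simpl; lra.
    apply pow_lt, lt_0_INR; lia. }
  assert (HQ : 0 <= Q) by (apply prodk_nonneg; intros; apply pow_le; auto).
  assert (E1 : kl_weight k N q z * Z = INR N ^ N * Q).
  { unfold kl_weight, Z, Q. rewrite <- prodk_mult.
    replace (INR N ^ N) with (prodk k (fun i => INR N ^ cnt z i))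
      by (rewrite <- Hlen, pow_list_sum, Hsum; auto).
    rewrite <- prodk_mult. apply prodk_ext. intros i Hi.
    destruct (Nat.eq_dec (cnt z i) 0) as [->|]. simpl; ring.
    rewrite <- !Rpow_mult_distr. f_equal. assert (INR (cnt z i) <> 0) by (apply not_0_INR; auto). field; auto. }
  assert (E2 : mprob N q z * Fz = INR (fact N) * Q).
  { rewrite (mprob_prodk k N q z Hz). unfold Fz, Q. rewrite Rmult_assoc, <- prodk_mult. f_equal.
    apply prodk_ext. intros. field. apply INR_fact_neq_0. }
  pose proof (prod_fact_exp_le k N z HN Hz) as I1. fold Fz Z in I1.
  pose proof (stirling_lower N) as I2.
  pose proof (mprob_nonneg k N q z Hz Hq).
  apply Rmult_le_reg_r with Z; auto. rewrite E1.
  apply Rle_trans with (INR (fact N) * exp (INR N) * Q). apply Rmult_le_compat_r; auto.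
  apply Rle_trans with (mprob N q z * (Fz * exp (INR N))).
  right. rewrite <- Rmult_assoc, E2. ring.
  rewrite Rmult_assoc. apply Rmult_le_compat_l; auto. Qed.

Lemma indic_cases (P : Prop) : (P /\ indic P = 1) \/ (~ P /\ indic P = 0).
Proof. unfold indic. destruct (excluded_middle_informative P); auto. Qed.

Section SimplexMap.

Variable k : nat.
Variable F : vec -> vec.
Hypothesis F_maps : forall x, inM k x -> inM k (F x).

Lemma rho_eq0_iff (x y : vec) : inM k x -> inM k y -> (rho k F x y = Fin 0 <-> vec_eq k y (F x)).
Proof. intros Hx Hy. pose proof (F_maps x Hx) as HF. rewrite rho_relent. split.
  - intros H i Hi. pose proof (relent_ge_hellinger k y (F x) 0 Hy HF H) as Hs.
    assert (Hnn : forall j, (j < k)%nat -> 0 <= (sqrt (y j) - sqrt (F x j)) ^ 2) by (intros; apply pow2_ge_0).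
    pose proof (sumk_ge_term k _ i Hnn Hi). pose proof (Hnn i Hi).
    assert (Hsq : sqrt (y i) - sqrt (F x i) = 0) by (apply Rsqr_0_uniq; unfold Rsqr; simpl in *; lra).
    apply sqrt_inj; [| |lra]. apply Hy; auto. apply HF; auto.
  - intros H. rewrite relent_Fin by (intros i Hi; rewrite H; auto).
    f_equal. replace 0 with (sumk k (fun _ => 0)) by (rewrite sumk_const; ring).
    apply sumk_ext. intros i Hi. rewrite H by auto.
    destruct (Req_EM_T (F x i) 0) as [->|]. ring.
    unfold Rdiv. rewrite Rinv_r, ln_1 by auto. ring. Qed.

Lemma rho_far_ge (beta : R) (x y : vec) : 0 < beta -> inM k x -> inM k y ->
  distk k (F x) y > beta -> ER_le (Fin (beta * beta / 4)) (rho k F x y).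
Proof. intros Hb Hx Hy Hd. rewrite rho_relent.
  destruct (relent k y (F x)) as [r|] eqn:Hr; simpl; auto.
  pose proof (relent_ge_hellinger k y (F x) r Hy (F_maps x Hx) Hr).
  destruct (distk_gt k (F x) y beta ltac:(lra) Hd) as [i [Hi Hgap]].
  assert (Hnn : forall j, (j < k)%nat -> 0 <= (sqrt (y j) - sqrt (F x j)) ^ 2) by (intros; apply pow2_ge_0).
  pose proof (sumk_ge_term k _ i Hnn Hi).
  assert (beta * beta / 4 <= (sqrt (y i) - sqrt (F x i)) ^ 2); [|lra].
  apply sqrt_gap_ge; auto.
  - split. apply Hy; auto. apply (inM_le1 k); auto.
  - split. apply (F_maps x Hx); auto. apply (inM_le1 k); auto. Qed.

Lemma rho_inf_far_pos (beta : R) (m : ER) : 0 < beta ->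
  is_inf (fun v => exists x y, inM k x /\ inM k y /\ distk k (F x) y > beta /\ v = rho k F x y) m ->
  ER_lt (Fin 0) m.
Proof. intros Hb [_ Hm].
  assert (ER_le (Fin (beta * beta / 4)) m).
  { apply Hm. intros s [x [y [Hx [Hy [Hd ->]]]]]. apply rho_far_ge; auto. }
  destruct m; simpl in *; auto. assert (0 < beta * beta / 4) by nra. lra. Qed.

Lemma kernel_fsum (N : nat) (x : vec) (G : vec -> Prop) :
  kernel k F N x G = fsum (comps k N) (fun z => indic (G (scaled_pt N z)) * mprob N (F x) z).
Proof. reflexivity. Qed.

Lemma indic_mprob_nonneg (N : nat) (x : vec) (P : Prop) (z : list nat) : inM k x -> In z (comps k N) ->
  0 <= indic P * mprob N (F x) z.
Proof. intros Hx Hz. destruct (indic_cases P) as [[_ ->]|[_ ->]]; [|lra].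
  rewrite Rmult_1_l. apply (mprob_nonneg k); auto. apply F_maps; auto. Qed.

Lemma kernel_ge_mprob (N : nat) (x : vec) (G : vec -> Prop) (z : list nat) : inM k x -> In z (comps k N) ->
  G (scaled_pt N z) -> mprob N (F x) z <= kernel k F N x G.
Proof. intros Hx Hz HG. rewrite kernel_fsum.
  destruct (indic_cases (G (scaled_pt N z))) as [[_ E]|[Hn _]]; [|contradiction].
  replace (mprob N (F x) z) with (indic (G (scaled_pt N z)) * mprob N (F x) z) by (rewrite E; ring).
  apply (fsum_ge_elem _ _ (fun z => indic (G (scaled_pt N z)) * mprob N (F x) z)); auto.
  intros. apply indic_mprob_nonneg; auto. Qed.

Lemma mprob_le_exp_rho (N : nat) (x : vec) (z : list nat) (m : R) : (1 <= N)%nat -> inM k x ->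
  In z (comps k N) -> ER_le (Fin m) (rho k F x (scaled_pt N z)) -> mprob N (F x) z <= exp (- INR N * m).
Proof. intros HN Hx Hz Hle. pose proof (proj1 (F_maps x Hx)) as Hq. rewrite rho_relent in Hle.
  destruct (relent k (scaled_pt N z) (F x)) as [r|] eqn:Hr.
  - eapply Rle_trans. apply (mprob_le_kl_weight k); auto.
    rewrite (kl_weight_relent k N (F x) z r); auto. apply exp_le_mono.
    assert (0 <= INR N) by apply pos_INR. simpl in Hle. nra.
  - rewrite (mprob_relent_PInf k N (F x) z); auto. left; apply exp_pos. Qed.

(* At most [(N + 1) ^ k] lattice points, each of weight at most [exp (- N m)]. *)
Lemma kernel_le_exp_inf (N : nat) (x : vec) (C : vec -> Prop) (m : R) : (1 <= N)%nat -> inM k x ->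
  is_inf (fun v => exists y, C y /\ v = rho k F x y) (Fin m) ->
  kernel k F N x C <= INR (S N) ^ k * exp (- INR N * m).
Proof. intros HN Hx [Hm _]. rewrite kernel_fsum.
  eapply Rle_trans; [apply fsum_le_const with (c := exp (- INR N * m))|].
  - intros z Hz. destruct (indic_cases (C (scaled_pt N z))) as [[HCz ->]|[_ ->]].
    + rewrite Rmult_1_l. apply mprob_le_exp_rho; eauto.
    + rewrite Rmult_0_l. left; apply exp_pos.
  - apply Rmult_le_compat_r. left; apply exp_pos.
    rewrite <- pow_INR. apply le_INR, comps_length. Qed.

Lemma kernel_eq0_inf_PInf (N : nat) (x : vec) (C : vec -> Prop) :
  is_inf (fun v => exists y, C y /\ v = rho k F x y) PInf -> kernel k F N x C = 0.
Proof. intros [Hm _]. rewrite kernel_fsum. apply fsum_eq0. intros z Hz.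
  destruct (indic_cases (C (scaled_pt N z))) as [[HCz ->]|[_ ->]]; [|ring].
  specialize (Hm _ (ex_intro _ (scaled_pt N z) (conj HCz eq_refl))).
  rewrite rho_relent in Hm. destruct (relent k (scaled_pt N z) (F x)) eqn:Hr; [contradiction|].
  rewrite (mprob_relent_PInf k N (F x) z); auto. ring. Qed.

Lemma kernel_upper_bound (C : vec -> Prop) (eta : R) : 0 < eta ->
  exists eps0, 0 < eps0 /\
    forall N, (0 < N)%nat -> / INR N < eps0 ->
    forall x, inM k x ->
    forall m, is_inf (fun v => exists y, C y /\ v = rho k F x y) m ->
      upper_ok (/ INR N) (kernel k F N x C) m eta.
Proof. intros Heta.
  destruct (log_growth_eventually_le (INR k) eta (pos_INR k) Heta) as [N0 HN0].
  exists (/ INR (S N0)). split. apply Rinv_0_lt_compat, lt_0_INR; lia.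
  intros N HN Heps x Hx m Hm. apply lt_of_inv_INR_lt in Heps; auto.
  assert (HNp : 0 < INR N) by (apply lt_0_INR; lia).
  destruct m as [m|]; simpl; [|apply kernel_eq0_inf_PInf; auto].
  pose proof (kernel_le_exp_inf N x C m ltac:(lia) Hx Hm) as HP.
  set (P := kernel k F N x C) in *.
  assert (0 <= P) by (apply fsum_nonneg; intros; apply indic_mprob_nonneg; auto).
  destruct (Req_EM_T P 0) as [|HP0]; [left; auto|right; split; [lra|]].
  assert (ln P <= INR k * ln (INR N + 1) - INR N * m).
  { eapply Rle_trans. apply ln_le_mono. split; [lra|eauto].
    rewrite ln_mult, ln_pow, ln_exp, S_INR by (auto using pow_lt, exp_pos, lt_0_INR). lra. }
  pose proof (HN0 N ltac:(lia) ltac:(lia)).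
  assert (INR k * ln (INR N + 1) <= eta * INR N) by (pose proof (pos_INR k); nra).
  apply Rle_trans with (/ INR N * (eta * INR N - INR N * m)).
  - apply Rmult_le_compat_l; [left; apply Rinv_0_lt_compat|]; lra.
  - right. field. lra. Qed.

(* Stirling's formula costs at most [(e N) ^ k] against [exp (- N rho)]. *)
Lemma ln_kernel_ge_lattice (N : nat) (x : vec) (G : vec -> Prop) (z : list nat) (r : R) :
  (1 <= N)%nat -> inM k x -> In z (comps k N) -> G (scaled_pt N z) ->
  rho k F x (scaled_pt N z) = Fin r ->
  0 < kernel k F N x G /\ - INR N * r - INR k * (1 + ln (INR N + 1)) <= ln (kernel k F N x G).
Proof. intros HN Hx Hz HG Hr. assert (HNp : 0 < INR N) by (apply lt_0_INR; lia).
  pose proof (kl_weight_le_mprob k N (F x) z HN Hz (proj1 (F_maps x Hx))) as Hkl.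
  rewrite (kl_weight_relent k N (F x) z r HN (proj1 (F_maps x Hx)) Hr) in Hkl.
  pose proof (kernel_ge_mprob N x G z Hx Hz HG) as HPt.
  set (P := kernel k F N x G) in *.
  set (eN := exp 1 * INR N) in *. assert (HeN : 0 < eN) by (unfold eN; pose proof (exp_pos 1); nra).
  assert (HeNk : 0 < eN ^ k) by (apply pow_lt; auto).
  pose proof (exp_pos (- INR N * r)).
  assert (HP : 0 < P) by (assert (0 < mprob N (F x) z * eN ^ k) by lra; nra).
  split; auto.
  assert (- INR N * r <= ln P + ln (eN ^ k)).
  { rewrite <- (ln_exp (- INR N * r)), <- ln_mult by auto. apply ln_le_mono. split; auto.
    eapply Rle_trans. apply Hkl. apply Rmult_le_compat_r; lra. }
  rewrite ln_pow in H0 by auto. unfold eN in H0. rewrite ln_mult, ln_exp in H0 by (auto using exp_pos).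
  assert (ln (INR N) <= ln (INR N + 1)) by (apply ln_le_mono; lra).
  pose proof (pos_INR k). nra. Qed.

(* The outcomes with no draw of type [i] are counted by the multinomial theorem for [q] with [q i := 0]. *)
Lemma kernel_M0_ge (N : nat) (x : vec) (i : nat) : (1 <= N)%nat -> (i < k)%nat -> inM k x ->
  (1 - F x i) ^ N <= kernel k F N x (inM0 k).
Proof. intros HN Hi Hx. pose proof (F_maps x Hx) as [Hq Hs].
  set (q0 := fun j => if Nat.eq_dec j i then 0 else F x j).
  assert (Hq0 : sumk k q0 = 1 - F x i).
  { rewrite <- Hs. clear -Hi. unfold q0. induction k as [|k' IH]; simpl. lia.
    destruct (Nat.eq_dec k' i) as [->|]. rewrite (sumk_ext i _ (F x)). ring.
    intros j Hj. destruct (Nat.eq_dec j i); auto; lia. rewrite IH by lia. ring. }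
  rewrite kernel_fsum, <- Hq0, <- multinomial_theorem. apply fsum_le. intros z Hz.
  destruct (Nat.eq_dec (cnt z i) 0) as [Hc|Hc].
  - assert (HM0 : inM0 k (scaled_pt N z)).
    { split. apply scaled_pt_inM; auto; lia. apply (prodk_eq0 k _ i Hi).
      unfold scaled_pt. fold (cnt z i). rewrite Hc. simpl. unfold Rdiv; ring. }
    destruct (indic_cases (inM0 k (scaled_pt N z))) as [[_ ->]|[Hn _]]; [|contradiction].
    rewrite Rmult_1_l, !(mprob_prodk k N _ z Hz). right. f_equal. apply prodk_ext. intros j Hj.
    unfold q0. destruct (Nat.eq_dec j i) as [->|]; auto. rewrite Hc. auto.
  - rewrite (mprob_eq0 k N q0 z i); auto.
    + apply indic_mprob_nonneg; auto.
    + unfold q0. destruct (Nat.eq_dec i i); congruence. Qed.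

End SimplexMap.

Lemma continuity_pt_eps (g : R -> R) (x0 : R) : continuity_pt g x0 -> forall e, 0 < e ->
  exists d, 0 < d /\ forall x, Rabs (x - x0) < d -> Rabs (g x - g x0) < e.
Proof. intros H e He. destruct (H e He) as [d [Hd H1]]. exists d. split; auto.
  intros x Hx. destruct (Req_EM_T x x0) as [->|]. rewrite Rminus_diag, Rabs_R0; auto.
  apply (H1 x). repeat split; auto. Qed.

Lemma ln_continuity_pt (t0 : R) : 0 < t0 -> continuity_pt ln t0.
Proof. intros. apply derivable_continuous_pt. exists (/ t0). apply derivable_pt_lim_ln; auto. Qed.

Lemma xlnx_continuity_pt (t0 : R) : 0 < t0 -> continuity_pt (fun t => t * ln t) t0.
Proof. intros. apply derivable_continuous_pt, (derivable_pt_mult id ln).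
  apply derivable_pt_id. exists (/ t0). apply derivable_pt_lim_ln; auto. Qed.

Lemma Rabs_xlnx_le (t : R) : 0 <= t <= 1 -> Rabs (t * ln t) <= 2 * sqrt t.
Proof. intros [[H0|<-] H1]; [|rewrite Rmult_0_l, Rabs_R0, sqrt_0; lra].
  assert (Hs : 0 < sqrt t) by (apply sqrt_lt_R0; auto).
  assert (Hl : ln t <= 0) by (rewrite <- ln_1; apply ln_le_mono; lra).
  rewrite Rabs_left1 by nra.
  assert (ln (/ sqrt t) <= / sqrt t - 1) by (apply ln_le_sub1, Rinv_0_lt_compat; auto).
  rewrite ln_Rinv in H by auto.
  assert (ln t = 2 * ln (sqrt t)) by (rewrite <- (sqrt_sqrt t) at 1 by lra; rewrite ln_mult by auto; ring).
  assert (Et : t = sqrt t * sqrt t) by (rewrite sqrt_sqrt; lra).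
  apply Rle_trans with (t * (2 / sqrt t)).
  - replace (- (t * ln t)) with (t * (- ln t)) by ring. apply Rmult_le_compat_l; unfold Rdiv; lra.
  - rewrite Et at 1. right. field. lra. Qed.

Lemma xlnx_cont (t0 : R) : 0 <= t0 -> forall e, 0 < e ->
  exists d, 0 < d /\ forall t, 0 <= t -> Rabs (t - t0) < d -> Rabs (t * ln t - t0 * ln t0) < e.
Proof. intros [Ht0|<-] e He.
  - destruct (continuity_pt_eps _ _ (xlnx_continuity_pt t0 Ht0) e He) as [d [Hd H]].
    exists d; split; auto.
  - exists (Rmin 1 ((e / 2) * (e / 2))). split. apply Rmin_glb_lt; [lra|nra].
    intros t Ht Hd. rewrite Rmult_0_l, Rminus_0_r. rewrite Rminus_0_r, Rabs_pos_eq in Hd by auto.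
    pose proof (Rmin_l 1 ((e / 2) * (e / 2))). pose proof (Rmin_r 1 ((e / 2) * (e / 2))).
    eapply Rle_lt_trans. apply Rabs_xlnx_le; lra.
    assert (sqrt t < e / 2) by (rewrite <- (sqrt_square (e / 2)) by lra; apply sqrt_lt_1_alt; lra).
    lra. Qed.

Lemma exists_near_minimizer (B : vec -> Prop) (g : vec -> R) (eta : R) : (exists y, B y) ->
  (forall y, B y -> 0 <= g y) -> 0 < eta -> exists y0, B y0 /\ forall y, B y -> g y0 <= g y + eta.
Proof. intros [y1 Hy1] Hnn He.
  destruct (completeness (fun v => exists y, B y /\ v = - g y)) as [L [HL1 HL2]].
  { exists 0. intros v [y [Hy ->]]. pose proof (Hnn y Hy). lra. }
  { exists (- g y1). eauto. }
  destruct (classic (exists y0, B y0 /\ - g y0 > L - eta)) as [[y0 [Hy0 H0]]|Hno].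
  - exists y0. split; auto. intros y Hy. assert (- g y <= L) by (apply HL1; eauto). lra.
  - exfalso. assert (L <= L - eta); [|lra]. apply HL2. intros v [y [Hy ->]].
    apply Rnot_lt_le. intros Hlt. apply Hno. exists y. split; auto; lra. Qed.

(* Rounding down the partial sums of [N y] gives counts within [1] of [N y]. *)
Lemma lattice_point_near (k N : nat) (y : vec) : (1 <= N)%nat -> inM k y ->
  exists z, In z (comps k N) /\ distk k y (scaled_pt N z) < / INR N.
Proof. intros HN [Hy Hs]. assert (HNp : 0 < INR N) by (apply lt_0_INR; lia).
  set (a := fun i => Int_part (INR N * sumk i y)).
  assert (Hmono : forall i, (i < k)%nat -> (a i <= a (S i))%Z).
  { intros i Hi. unfold a. pose proof (base_Int_part (INR N * sumk i y)).
    pose proof (base_Int_part (INR N * sumk (S i) y)).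
    assert (INR N * sumk i y <= INR N * sumk (S i) y)
      by (apply Rmult_le_compat_l; [apply pos_INR|simpl; pose proof (Hy i Hi); lra]).
    assert (IZR (Int_part (INR N * sumk i y)) < IZR (Int_part (INR N * sumk (S i) y) + 1))
      by (rewrite plus_IZR; lra).
    apply lt_IZR in H2. lia. }
  set (w := fun i => Z.to_nat (a (S i) - a i)).
  assert (Hw : forall i, (i < k)%nat -> INR (w i) = IZR (a (S i)) - IZR (a i)).
  { intros i Hi. unfold w. rewrite INR_IZR_INZ, Z2Nat.id by (pose proof (Hmono i Hi); lia).
    apply minus_IZR. }
  set (z := map w (seq 0 k)).
  assert (Hcnt : forall i, (i < k)%nat -> cnt z i = w i).
  { intros. unfold cnt, z. rewrite (nth_indep _ O (w O)) by (rewrite length_map, length_seq; auto).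
    rewrite map_nth, seq_nth; auto. }
  assert (Hlen : length z = k) by (unfold z; rewrite length_map, length_seq; auto).
  exists z. split.
  - apply comps_intro; auto. apply INR_eq. rewrite <- sumk_cnt, Hlen.
    transitivity (sumk k (fun i => IZR (a (S i)) - IZR (a i))).
    + apply sumk_ext. intros. rewrite Hcnt; auto.
    + rewrite (sumk_telescope k (fun i => IZR (a i))). unfold a. simpl sumk.
      rewrite Hs, Rmult_0_r, Rmult_1_r, Int_part_INR, <- INR_IZR_INZ.
      replace 0 with (INR 0) by reflexivity. rewrite Int_part_INR. simpl; ring.
  - apply distk_lt. apply Rinv_0_lt_compat; auto. intros i Hi. unfold scaled_pt. fold (cnt z i).
    rewrite Hcnt, Hw by auto.
    pose proof (base_Int_part (INR N * sumk i y)). pose proof (base_Int_part (INR N * sumk (S i) y)).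
    fold (a i) in H. fold (a (S i)) in H0. simpl sumk in H0.
    replace (y i - (IZR (a (S i)) - IZR (a i)) / INR N)
      with ((INR N * y i - (IZR (a (S i)) - IZR (a i))) * / INR N) by (field; lra).
    rewrite Rabs_mult, (Rabs_pos_eq (/ INR N)) by (left; apply Rinv_0_lt_compat; auto).
    rewrite <- (Rmult_1_l (/ INR N)) at 2. apply Rmult_lt_compat_r. apply Rinv_0_lt_compat; auto.
    apply Rabs_def1; lra. Qed.

Section MultinomialProcess.

Variable k : nat.
Variable f : nat -> vec -> R.
Hypothesis f_pos : forall i, (i < k)%nat -> forall x, inM k x -> 0 < f i x.
Hypothesis f_cont : forall i, (i < k)%nat -> forall x, inM k x ->
  forall e, 0 < e -> exists del, 0 < del /\
    forall y, inM k y -> distk k x y < del -> Rabs (f i y - f i x) < e.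
Hypothesis F_maps : forall x, inM k x -> inM k (Fof f x).

Lemma Fof_cont (i : nat) (x : vec) : (i < k)%nat -> inM k x -> forall e, 0 < e -> exists del, 0 < del /\
  forall y, inM k y -> distk k x y < del -> Rabs (Fof f y i - Fof f x i) < e.
Proof. intros Hi Hx e He.
  destruct (f_cont i Hi x Hx (e / 2) ltac:(lra)) as [d1 [Hd1 H1]].
  set (a := Rabs (f i x) + 1). assert (Ha : 0 < a) by (unfold a; pose proof (Rabs_pos (f i x)); lra).
  exists (Rmin d1 (e / 2 / a)). split. apply Rmin_glb_lt; auto. apply Rdiv_lt_0_compat; lra.
  intros y Hy Hd. unfold Fof.
  pose proof (Rmin_l d1 (e / 2 / a)). pose proof (Rmin_r d1 (e / 2 / a)).
  pose proof (H1 y Hy ltac:(lra)). pose proof (distk_coord k x y i Hi).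
  assert (Hyi : 0 <= y i <= 1) by (split; [apply (proj1 Hy); auto|apply (inM_le1 k); auto]).
  replace (y i * f i y - x i * f i x) with (y i * (f i y - f i x) + f i x * (y i - x i)) by ring.
  eapply Rle_lt_trans. apply Rabs_triang. rewrite !Rabs_mult, (Rabs_minus_sym (y i)), (Rabs_pos_eq (y i)) by lra.
  assert (y i * Rabs (f i y - f i x) <= Rabs (f i y - f i x)) by (pose proof (Rabs_pos (f i y - f i x)); nra).
  assert (Rabs (f i x) * Rabs (x i - y i) <= a * distk k x y)
    by (apply Rmult_le_compat; auto using Rabs_pos; unfold a; lra).
  assert (a * distk k x y < a * (e / 2 / a)) by (apply Rmult_lt_compat_l; lra).
  replace (a * (e / 2 / a)) with (e / 2) in * by (field; lra). lra. Qed.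

Lemma Fof_pos (x : vec) (i : nat) : inM1 k x -> (i < k)%nat -> 0 < Fof f x i.
Proof. intros Hx Hi. apply Rmult_lt_0_compat. apply (inM1_pos k); auto. apply f_pos, Hx; auto. Qed.

Lemma ln_Fof_cont (i : nat) (x0 : vec) : (i < k)%nat -> inM1 k x0 -> forall e, 0 < e -> exists d, 0 < d /\
  forall x, inM k x -> distk k x0 x < d -> 0 < Fof f x i /\ Rabs (ln (Fof f x i) - ln (Fof f x0 i)) < e.
Proof. intros Hi Hx0 e He. pose proof (Fof_pos x0 i Hx0 Hi) as Hq0.
  destruct (continuity_pt_eps _ _ (ln_continuity_pt _ Hq0) e He) as [d1 [Hd1 H1]].
  destruct (Fof_cont i x0 Hi (proj1 Hx0) (Rmin d1 (Fof f x0 i / 2)) ltac:(apply Rmin_glb_lt; lra))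
    as [d2 [Hd2 H2]].
  exists d2. split; auto. intros x Hx Hd. specialize (H2 x Hx Hd).
  pose proof (Rmin_l d1 (Fof f x0 i / 2)). pose proof (Rmin_r d1 (Fof f x0 i / 2)).
  assert (Fof f x0 i / 2 < Fof f x i) by (apply Rabs_def2 in H2; lra).
  split. lra. apply H1; lra. Qed.

Lemma rho_interior (x y : vec) : inM1 k x -> inM k y ->
  rho k (Fof f) x y = Fin (sumk k (fun i => y i * ln (y i) - y i * ln (Fof f x i))).
Proof. intros Hx Hy. apply relent_pos_Fin. intros; apply Fof_pos; auto. apply Hy. Qed.

Lemma rho_summand_cont (x y : vec) (i : nat) : inM1 k x -> inM k y -> (i < k)%nat -> forall e, 0 < e ->
  exists d, 0 < d /\ forall x' y', inM k x' -> inM k y' -> distk k x x' < d -> distk k y y' < d ->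
    Rabs ((y' i * ln (y' i) - y' i * ln (Fof f x' i)) - (y i * ln (y i) - y i * ln (Fof f x i))) < e.
Proof. intros Hx Hy Hi e He.
  destruct (xlnx_cont (y i) (proj1 Hy i Hi) (e / 3) ltac:(lra)) as [d1 [Hd1 H1]].
  destruct (ln_Fof_cont i x Hi Hx (e / 3) ltac:(lra)) as [d2 [Hd2 H2]].
  set (L := Rabs (ln (Fof f x i)) + 1).
  assert (HL : 0 < L) by (unfold L; pose proof (Rabs_pos (ln (Fof f x i))); lra).
  set (d3 := e / 3 / L). assert (Hd3 : 0 < d3) by (unfold d3; apply Rdiv_lt_0_compat; lra).
  exists (Rmin d1 (Rmin d2 d3)). split. repeat apply Rmin_glb_lt; auto.
  intros x' y' Hx' Hy' Hdx Hdy.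
  pose proof (Rmin_l d1 (Rmin d2 d3)). pose proof (Rmin_r d1 (Rmin d2 d3)).
  pose proof (Rmin_l d2 d3). pose proof (Rmin_r d2 d3).
  destruct (H2 x' Hx' ltac:(lra)) as [_ Hln].
  assert (Hyy : Rabs (y' i - y i) <= distk k y y') by (rewrite Rabs_minus_sym; apply distk_coord; auto).
  pose proof (H1 (y' i) (proj1 Hy' i Hi) ltac:(lra)).
  assert (Hy'1 : 0 <= y' i <= 1) by (split; [apply (proj1 Hy'); auto|apply (inM_le1 k); auto]).
  replace ((y' i * ln (y' i) - y' i * ln (Fof f x' i)) - (y i * ln (y i) - y i * ln (Fof f x i)))
    with ((y' i * ln (y' i) - y i * ln (y i)) - y' i * (ln (Fof f x' i) - ln (Fof f x i))
          - ln (Fof f x i) * (y' i - y i)) by ring.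
  assert (Rabs (y' i * (ln (Fof f x' i) - ln (Fof f x i))) <= Rabs (ln (Fof f x' i) - ln (Fof f x i))).
  { rewrite Rabs_mult, Rabs_pos_eq by lra. pose proof (Rabs_pos (ln (Fof f x' i) - ln (Fof f x i))). nra. }
  assert (Rabs (ln (Fof f x i) * (y' i - y i)) < e / 3).
  { rewrite Rabs_mult. apply Rle_lt_trans with (L * distk k y y').
    apply Rmult_le_compat; auto using Rabs_pos. unfold L; lra.
    apply Rlt_le_trans with (L * d3). apply Rmult_lt_compat_l; lra. right. unfold d3. field. lra. }
  pose proof (Rabs_triang (y' i * ln (y' i) - y i * ln (y i) - y' i * (ln (Fof f x' i) - ln (Fof f x i)))
    (- (ln (Fof f x i) * (y' i - y i)))).
  pose proof (Rabs_triang (y' i * ln (y' i) - y i * ln (y i)) (- (y' i * (ln (Fof f x' i) - ln (Fof f x i))))).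
  rewrite Rabs_Ropp in *. unfold Rminus in *. lra. Qed.

Lemma rho_continuous : ER_continuous_on k (fun x y => inM1 k x /\ inM k y) (rho k (Fof f)).
Proof. intros x y [Hx Hy]. rewrite rho_interior by auto.
  intros e He. pose proof (pos_INR k) as Hk. set (e' := e / (INR k + 1)).
  assert (He' : 0 < e') by (apply Rdiv_lt_0_compat; lra).
  destruct (common_delta (fun i d => forall x' y', inM k x' -> inM k y' -> distk k x x' < d -> distk k y y' < d ->
    Rabs ((y' i * ln (y' i) - y' i * ln (Fof f x' i)) - (y i * ln (y i) - y i * ln (Fof f x i))) < e') k)
    as [d [Hd Hcd]].
  { intros i d0 d' H0 [H1 H2] x' y' ? ? ? ?. apply H0; auto; lra. }
  { intros i Hi. apply rho_summand_cont; auto. }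
  exists d. split; auto. intros x' y' [Hx' Hy'] Hdx Hdy.
  eexists. split. apply rho_interior; auto.
  rewrite <- sumk_minus. eapply Rle_lt_trans. apply Rabs_sumk_le.
  apply Rle_lt_trans with (sumk k (fun _ => e')).
  - apply sumk_le. intros i Hi. left. apply (Hcd i Hi x' y' (proj1 Hx') Hy' Hdx Hdy).
  - rewrite sumk_const. unfold e'. apply Rmult_lt_reg_r with (INR k + 1). lra.
    replace (INR k * (e / (INR k + 1)) * (INR k + 1)) with (INR k * e) by (field; lra). nra. Qed.

Lemma kernel_ball_lower_near (c : vec) (r : R) (x0 y0 : vec) (a e : R) :
  inM1 k x0 -> ballM k c r y0 -> rho k (Fof f) x0 y0 = Fin a -> 0 < e ->
  exists d N0, 0 < d /\ forall x, inM1 k x -> distk k x0 x < d -> forall N, (N0 <= N)%nat -> (0 < N)%nat ->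
    0 < kernel k (Fof f) N x (ballM k c r) /\
    - a - e <= / INR N * ln (kernel k (Fof f) N x (ballM k c r)).
Proof. intros Hx0 [Hy0 Hcy0] Ha He.
  set (s := r - distk k c y0). assert (Hs : 0 < s) by (unfold s; lra).
  pose proof (rho_continuous x0 y0 (conj Hx0 Hy0)) as Hcont. rewrite Ha in Hcont.
  destruct (Hcont (e / 2) ltac:(lra)) as [d [Hd Hnear]].
  destruct (log_growth_eventually_le (INR k) (e / 2) (pos_INR k) ltac:(lra)) as [N1 HN1].
  assert (Hsd : 0 < Rmin s d) by (apply Rmin_glb_lt; auto).
  destruct (INR_eventually_gt (/ Rmin s d)) as [N2 HN2].
  exists d, (max (max N1 N2) 1). split; auto.
  intros x Hx Hdx N HN HN0. assert (HNp : 0 < INR N) by (apply lt_0_INR; lia).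
  assert (Hinv : / INR N < Rmin s d) by (apply inv_INR_lt_inv; auto; apply HN2; lia).
  pose proof (Rmin_l s d). pose proof (Rmin_r s d).
  destruct (lattice_point_near k N y0 ltac:(lia) Hy0) as [z [Hz Hdz]].
  pose proof (scaled_pt_inM k N z HN0 Hz) as Hyz.
  assert (Hball : ballM k c r (scaled_pt N z)).
  { split; auto. pose proof (distk_triangle k c y0 (scaled_pt N z)). unfold s in *. lra. }
  destruct (Hnear x (scaled_pt N z) (conj Hx Hyz) Hdx ltac:(lra)) as [r' [Hr' Hr'a]].
  destruct (ln_kernel_ge_lattice k (Fof f) F_maps N x (ballM k c r) z r' ltac:(lia) (proj1 Hx) Hz Hball Hr')
    as [HP Hln].
  split; auto. pose proof (HN1 N ltac:(lia) ltac:(lia)). apply Rabs_def2 in Hr'a.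
  apply Rmult_le_reg_l with (INR N); auto. rewrite <- Rmult_assoc, Rinv_r, Rmult_1_l by lra. nra. Qed.

Lemma rho_interior_ge_of_ln_near (x0 x y : vec) (e : R) : inM k y ->
  (forall i, (i < k)%nat -> Rabs (ln (Fof f x i) - ln (Fof f x0 i)) < e) ->
  sumk k (fun i => y i * ln (y i) - y i * ln (Fof f x0 i)) - e
  <= sumk k (fun i => y i * ln (y i) - y i * ln (Fof f x i)).
Proof. intros [Hy Hy1] Hln. replace e with (e * sumk k y) by (rewrite Hy1; ring).
  rewrite <- sumk_scal, <- sumk_minus. apply sumk_le. intros i Hi.
  specialize (Hln i Hi). apply Rabs_def2 in Hln. pose proof (Hy i Hi). nra. Qed.

(* Near [x0], the kernel of a ball is bounded below through a lattice point next to a near-minimiser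
   [y0] of [rho x0] in the ball, while the infimum of [rho x] over the ball is not much below [rho x0 y0]. *)
Lemma kernel_lower_local (c : vec) (r eta : R) (x0 : vec) : inM k c -> 0 < r -> 0 < eta -> inM1 k x0 ->
  exists d N0, 0 < d /\ forall x, inM1 k x -> distk k x0 x < d -> forall N, (N0 <= N)%nat -> (0 < N)%nat ->
    forall m, is_inf (fun v => exists y, ballM k c r y /\ v = rho k (Fof f) x y) m ->
    lower_ok (/ INR N) (kernel k (Fof f) N x (ballM k c r)) m eta.
Proof. intros Hc Hr Heta Hx0.
  set (R0 := fun y => sumk k (fun i => y i * ln (y i) - y i * ln (Fof f x0 i))).
  assert (Hnn : forall y, ballM k c r y -> 0 <= R0 y).
  { intros y [Hy _].
    pose proof (relent_ge_hellinger k y _ _ Hy (F_maps x0 (proj1 Hx0)) (rho_interior x0 y Hx0 Hy)).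
    pose proof (sumk_nonneg k (fun i => (sqrt (y i) - sqrt (Fof f x0 i)) ^ 2) (fun i _ => pow2_ge_0 _)).
    unfold R0; lra. }
  destruct (exists_near_minimizer (ballM k c r) R0 (eta / 4)) as [y0 [Hby0 Hmin]]; auto; [|lra|].
  { exists c. split; auto. rewrite distk_refl; auto. }
  destruct (kernel_ball_lower_near c r x0 y0 (R0 y0) (eta / 4) Hx0 Hby0
    (rho_interior x0 y0 Hx0 (proj1 Hby0)) ltac:(lra)) as [d1 [N0 [Hd1 Hlow]]].
  destruct (common_delta (fun i d => forall x, inM k x -> distk k x0 x < d ->
     Rabs (ln (Fof f x i) - ln (Fof f x0 i)) < eta / 4) k) as [d2 [Hd2 Hln]].
  { intros i d0 d' H0 [H1 H2] x ? ?. apply H0; auto; lra. }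
  { intros i Hi. destruct (ln_Fof_cont i x0 Hi Hx0 (eta / 4)) as [d [Hd H]]; [lra|].
    exists d. split; auto. intros x Hx Hdx. apply H; auto. }
  exists (Rmin d1 d2), N0. split. apply Rmin_glb_lt; auto.
  intros x Hx Hdx N HN HN0 m [_ Hm].
  pose proof (Rmin_l d1 d2). pose proof (Rmin_r d1 d2).
  destruct (Hlow x Hx ltac:(lra) N HN HN0) as [HP HlnP].
  assert (Hlb : ER_le (Fin (R0 y0 - eta / 2)) m).
  { apply Hm. intros v [y [Hby ->]]. rewrite rho_interior by (auto; apply Hby). simpl.
    pose proof (Hmin y Hby).
    pose proof (rho_interior_ge_of_ln_near x0 x y (eta / 4) (proj1 Hby)
      (fun i Hi => Hln i Hi x (proj1 Hx) ltac:(lra))).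
    unfold R0 in *. lra. }
  destruct m as [m|]; simpl in *; auto. split; auto. lra. Qed.

Lemma kernel_lower_bound (K : vec -> Prop) : Defs.compact k K -> (forall x, K x -> inM1 k x) ->
  forall c r, inM k c -> 0 < r -> forall eta, 0 < eta ->
  exists eps0, 0 < eps0 /\
    forall N, (0 < N)%nat -> / INR N < eps0 ->
    forall x, K x ->
    forall m, is_inf (fun v => exists y, ballM k c r y /\ v = rho k (Fof f) x y) m ->
      lower_ok (/ INR N) (kernel k (Fof f) N x (ballM k c r)) m eta.
Proof. intros HK HK1 c r Hc Hr eta Heta.
  set (Good := fun t : vec * R * nat => let '(x0, d, n0) := t in 0 < d /\
    forall x, inM1 k x -> distk k x0 x < d -> forall N, (n0 <= N)%nat -> (0 < N)%nat ->
    forall m, is_inf (fun v => exists y, ballM k c r y /\ v = rho k (Fof f) x y) m ->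
    lower_ok (/ INR N) (kernel k (Fof f) N x (ballM k c r)) m eta).
  set (U := fun (t : {t | Good t}) (x : vec) => let '(x0, d, _) := proj1_sig t in distk k x0 x < d).
  destruct (HK {t | Good t} U) as [l Hl].
  - intros [[[x0 d] n0] Ht] x Hx. unfold U in *; simpl in *.
    exists (d - distk k x0 x). split. lra.
    intros y Hy. pose proof (distk_triangle k x0 x y). lra.
  - intros x Hx. destruct (kernel_lower_local c r eta x Hc Hr Heta (HK1 x Hx)) as [d [n0 Hg]].
    exists (exist Good (x, d, n0) Hg). unfold U; simpl. rewrite distk_refl. apply Hg.
  - set (Nmax := fold_right max O (map (fun t : {t | Good t} => snd (proj1_sig t)) l)).
    exists (/ INR (S Nmax)). split. apply Rinv_0_lt_compat, lt_0_INR; lia.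
    intros N HN Heps x Hx m Hm. apply lt_of_inv_INR_lt in Heps; auto.
    destruct (Hl x Hx) as [[[[x0 d] n0] [Hd HG]] [Hin HU]]. unfold U in HU; simpl in HU.
    apply (HG x (HK1 x Hx) HU N); auto.
    apply (in_map (fun t : {t | Good t} => snd (proj1_sig t))) in Hin.
    apply in_le_fold_max in Hin. simpl in Hin. lia. Qed.

(* Near [M0] some [F_i] is small, and drawing no outcome [i] lands the process in [M0]. *)
Lemma multinomial_LD0 : Hyp_LD0 k (kernel k (Fof f)).
Proof. intros c Hc.
  assert (Hec : exp (- c) < 1) by (rewrite <- exp_0; apply exp_increasing; lra).
  pose proof (exp_pos (- c)). set (d := 1 - exp (- c)).
  exists (fun x => inM k x /\ exists i, (i < k)%nat /\ Fof f x i < d). split; [|split].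
  - split. intros x [H1 _]; auto.
    intros x [Hx [i [Hi Hd]]].
    destruct (Fof_cont i x Hi Hx (d - Fof f x i) ltac:(lra)) as [r [Hr H1]].
    exists r. split; auto. intros y Hy Hxy. split; auto. exists i. split; auto.
    pose proof (H1 y Hy Hxy). apply Rabs_def2 in H0. lra.
  - intros x [Hx Hp]. split; auto. destruct (prodk_eq0_inv k x Hp) as [j [Hj Hxj]].
    exists j. split; auto. unfold Fof. rewrite Hxj. unfold d. lra.
  - intros del Hdel. exists O. intros N _ HN x [Hx [i [Hi Hd]]].
    assert (HNp : 0 < INR N) by (apply lt_0_INR; lia).
    pose proof (kernel_M0_ge k (Fof f) F_maps N x i ltac:(lia) Hi Hx).
    assert (Hq1 : exp (- c) < 1 - Fof f x i) by (unfold d in Hd; lra).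
    assert (Hpow : 0 < (1 - Fof f x i) ^ N) by (apply pow_lt; lra).
    split; [lra|].
    assert (INR N * ln (1 - Fof f x i) <= ln (kernel k (Fof f) N x (inM0 k)))
      by (rewrite <- ln_pow by lra; apply ln_le_mono; lra).
    assert (- c < ln (1 - Fof f x i)) by (rewrite <- (ln_exp (- c)); apply ln_increasing; auto).
    apply Rle_trans with (ln (1 - Fof f x i)). lra.
    apply Rmult_le_reg_l with (INR N); auto. rewrite <- Rmult_assoc, Rinv_r, Rmult_1_l by lra. auto. Qed.

End MultinomialProcess.

Theorem mainTheorem19 (k : nat) (f : nat -> vec -> R)
  (f_pos : forall i, (i < k)%nat -> forall x, inM k x -> 0 < f i x)
  (f_cont : forall i, (i < k)%nat -> forall x, inM k x ->
     forall e, 0 < e -> exists del, 0 < del /\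
       forall y, inM k y -> distk k x y < del -> Rabs (f i y - f i x) < e)
  (F_maps : forall x, inM k x -> inM k (Fof f x)) :
  Hyp_LD k (Fof f) (rho k (Fof f)) (kernel k (Fof f)) /\
  Hyp_LD0 k (kernel k (Fof f)).
Proof.
  split; [split; [|split; [|split; [|split]]]|].
  - exact (rho_continuous k f f_pos f_cont).
  - intros x y Hx Hy. apply rho_eq0_iff; auto.
  - intros beta Hb m. apply rho_inf_far_pos; auto.
  - exact (kernel_lower_bound k f f_pos f_cont F_maps).
  - intros C _ eta Heta. apply kernel_upper_bound; auto.
  - exact (multinomial_LD0 k f f_cont F_maps).
Qed.
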